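(* Let $(S,* )$ be a finite cycle set of class $d$ and let $k$ be a positive integer with $k<d$. Then the cycle set $(S^{[k]},\star)$ has class $d/\gcd(d,k)$. Moreover, $(S^{[d+1]},\star)$ coincides with $(S,* )$ as a cycle set, i.e. $\psi_{d+1}(s)(t)=s*t$ for all $s,t\in S$.
   Context: A cycle set is a set $S$ with a binary operation $*$ such that each $t\mapsto s*t$ is bijective and $(s*t)*(s*u)=(t*s)*(t*u)$ for all $s,t,u$. Write $S=\{s_1,\dots,s_n\}$, let $\psi(s)\in\mathfrak S_n$ satisfy $s_i*s_j=s_{\psi(s_i)(j)}$, $T(s)=s*s$, and $\psi_k(s)=\psi(T^{k-1}(s))\circ\cdots\circ\psi(T(s))\circ\psi(s)$. The class of a finite cycle set is the least integer $d\ge1$ with $\psi_d(s)=\mathrm{id}$ for all $s$. Let $M=\langle S\mid s(s*t)=t(t*s)\rangle^+$ be the structure monoid and $s^{[k]}=s\,T(s)\cdots T^{k-1}(s)\in M$. For $k\ge1$, $S^{[k]}=\{s^{[k]}:s\in S\}$ with $s^{[k]}\star t^{[k]}=(\psi_k(s)(t))^{[k]}$ is a cycle set (identified with $S$ via $s\mapsto s^{[k]}$). *)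

From mathcomp Require Import all_boot.
Set Implicit Arguments. Unset Strict Implicit. Unset Printing Implicit Defensive.

Definition is_cycle_set (S : finType) (op : S -> S -> S) : Prop :=
  (forall s, bijective (op s)) /\
  (forall s t u, op (op s t) (op s u) = op (op t s) (op t u)).

Definition Tsq (S : finType) (op : S -> S -> S) (s : S) : S := op s s.

(* psi_k(s) = psi(T^{k-1}(s)) o ... o psi(T(s)) o psi(s), where psi(s) is
   left multiplication by s; psi_0(s) = id. Recursively
   psi_{k+1}(s) = psi_k(T(s)) o psi(s). *)
Fixpoint psik (S : finType) (op : S -> S -> S) (k : nat) (s : S) : S -> S :=
  match k with
  | 0 => id
  | k'.+1 => psik op k' (Tsq op s) \o op s
  end.

(* The operation of S^[k], transported to S via s |-> s^[k]:
   s^[k] * t^[k] = (psi_k(s)(t))^[k]. *)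
Definition star_op (S : finType) (op : S -> S -> S) (k : nat) : S -> S -> S :=
  fun s t => psik op k s t.

Definition has_class (S : finType) (op : S -> S -> S) (d : nat) : Prop :=
  0 < d /\ (forall s, psik op d s =1 id) /\
  (forall d', 0 < d' -> d' < d -> ~ (forall s, psik op d' s =1 id)).

From mathcomp Require Import all_boot.

Set Implicit Arguments.
Unset Strict Implicit.

(* Since psi_{a+b}(s) = psi_b(T^a(s)) o psi_a(s) and psi_a(s)(s) = T^a(s), the
   maps psi_m of S^[k] are the maps psi_{km} of S.  The exponents n with
   psi_n = id are exactly the multiples of the class d, so for S^[k] they are
   the m with d | km, i.e. the multiples of d / gcd(d, k).  Finally
   psi_{d+1}(s) = psi_1(T^d(s)) o psi_d(s) and T^d(s) = psi_d(s)(s) = s. *)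

Definition psik_trivial (S : finType) (op : S -> S -> S) n :=
  forall s, psik op n s =1 id.

Section Psik.
Variables (S : finType) (op : S -> S -> S).

Lemma psikD a b s :
  psik op (a + b) s =1 psik op b (iter a (Tsq op) s) \o psik op a s.
Proof. by elim: a s => [|a IHa] s x //=; rewrite IHa -iterSr. Qed.

Lemma psik_diag a s : psik op a s s = iter a (Tsq op) s.
Proof. by elim: a s => [|a IHa] s //=; rewrite -/(Tsq op s) IHa -iterSr. Qed.

Lemma psik_star k m s : psik (star_op op k) m s =1 psik op (k * m) s.
Proof.
elim: m s => [|m IHm] s x; first by rewrite muln0.
by rewrite /= IHm mulnS psikD /= /Tsq /star_op psik_diag.
Qed.

Lemma psik_trivial_star k m :
  psik_trivial (star_op op k) m <-> psik_trivial op (k * m).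
Proof. by split=> triv s x; have := triv s x; rewrite psik_star. Qed.

Lemma psik_trivial_iterT n s : psik_trivial op n -> iter n (Tsq op) s = s.
Proof. by move=> triv_n; rewrite -psik_diag triv_n. Qed.

Lemma psik_trivialD a b :
  psik_trivial op a -> psik_trivial op (a + b) <-> psik_trivial op b.
Proof.
move=> triv_a; split=> triv s x.
- by have := triv s x; rewrite psikD /= triv_a psik_trivial_iterT.
- by rewrite psikD /= triv_a psik_trivial_iterT // triv.
Qed.

Lemma psik_trivialM n q : psik_trivial op n -> psik_trivial op (q * n).
Proof.
move=> triv_n; elim: q => [|q IHq] /=; first by move=> s x.
by rewrite mulSn; exact: (psik_trivialD (q * n) triv_n).2 IHq.
Qed.

Lemma has_class_psik_trivial d :
  has_class op d -> forall n, psik_trivial op n <-> d %| n.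
Proof.
move=> [d_gt0 [triv_d min_d]] n.
have triv_qd := psik_trivialM (n %/ d) triv_d.
rewrite (divn_eq n d) dvdn_addr ?dvdn_mull //.
apply: iff_trans (psik_trivialD _ triv_qd) _.
have := ltn_pmod n d_gt0; case: (n %% d) => [|r] lt_rd.
  by rewrite dvdn0; split=> // _ s x.
split=> [triv_r | /(dvdn_leq (ltn0Sn r))]; last by rewrite leqNgt lt_rd.
by case: (min_d r.+1 isT lt_rd triv_r).
Qed.

Lemma psik_trivial_has_class e :
  0 < e -> (forall n, psik_trivial op n <-> e %| n) -> has_class op e.
Proof.
move=> e_gt0 triv_dvd; split=> //; split; first exact/triv_dvd.
move=> n n_gt0 lt_ne /triv_dvd/(dvdn_leq n_gt0).
by rewrite leqNgt lt_ne.
Qed.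

End Psik.

Lemma dvdn_mull_div_gcd d k m :
  0 < k -> (d %| k * m) = (d %/ gcdn d k %| m).
Proof.
move=> k_gt0.
have lcm_dk : lcmn d k = k * (d %/ gcdn d k).
  by rewrite /lcmn mulnC muln_divA ?dvdn_gcdl.
rewrite -(@dvdn_pmul2l k (d %/ gcdn d k) m k_gt0) -lcm_dk dvdn_lcm.
by rewrite (dvdn_mulr m (dvdnn k)) andbT.
Qed.

Theorem mainTheorem10 (S : finType) (op : S -> S -> S) (d k : nat) :
  is_cycle_set op -> has_class op d -> 0 < k -> k < d ->
  has_class (star_op op k) (d %/ gcdn d k) /\
  (forall s t : S, star_op op d.+1 s t = op s t).
Proof.
move=> _ class_d k_gt0 _.
have [d_gt0 [triv_d _]] := class_d.
split.
- apply: psik_trivial_has_class.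
    by rewrite divn_gt0 ?gcdn_gt0 ?d_gt0 // dvdn_leq ?dvdn_gcdl.
  move=> m; rewrite -dvdn_mull_div_gcd //.
  exact: iff_trans (psik_trivial_star op k m) (has_class_psik_trivial class_d _).
- move=> s t.
  by rewrite /star_op -addn1 psikD /= triv_d psik_trivial_iterT.
Qed.
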